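(* Let $d\ge 3$ and let $K_d$ be the complete graph on the vertex set $\{1,\ldots,d\}$. Let $\alpha\in\mathbb{C}$ be a root of the Ehrhart polynomial $i(\mathcal{P}_{K_d},m)$ of the edge polytope $\mathcal{P}_{K_d}$. Then (1) if $d=3$, then $\alpha\in\{-1,-2\}$; (2) if $d\ge 4$, then $-\tfrac{d}{2}<\operatorname{Re}(\alpha)<0$.
   Context: For a graph $G$ on vertex set $\{1,\ldots,d\}$ with edge set $E(G)$, and an edge $e=\{i,j\}$, set $\rho(e)=\mathbf{e}_i+\mathbf{e}_j\in\mathbb{R}^d$, where $\mathbf{e}_i$ is the $i$-th unit coordinate vector. The edge polytope $\mathcal{P}_G$ is the convex hull of $\{\rho(e): e\in E(G)\}$. For an integral convex polytope $\mathcal{P}\subset\mathbb{R}^N$, its Ehrhart polynomial is the polynomial $i(\mathcal{P},m)$ satisfying $i(\mathcal{P},m)=\#(m\mathcal{P}\cap\mathbb{Z}^N)$ for all integers $m\ge 0$. *)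

From HB Require Import structures.
From mathcomp Require Import all_boot all_order all_algebra all_field.
From mathcomp Require Import reals.
Set Implicit Arguments. Unset Strict Implicit. Unset Printing Implicit Defensive.
Import Order.TTheory GRing.Theory Num.Theory.
Local Open Scope ring_scope.

(* Vertex set {1,...,d} is modelled by 'I_d; vectors of R^d by functions 'I_d -> R. *)

Definition rho (R : realType) (d : nat) (i j : 'I_d) : 'I_d -> R :=
  fun k => (k == i)%:R + (k == j)%:R.

(* x lies in m * P_{K_d}, where P_{K_d} = conv{rho(e) : e edge of K_d};
   edges of the complete graph K_d are the pairs {i,j} with i < j;
   m * P = { m y | y in P }, and y in P iff y is a convex combination
   of the rho(e). *)
Definition in_dilated_edge_polytope_Kd (R : realType) (d m : nat)
    (x : 'I_d -> R) : Prop :=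
  exists lam : 'I_d -> 'I_d -> R,
    [/\ (forall i j : 'I_d, 0 <= lam i j),
        (forall i j : 'I_d, ~~ (i < j)%N -> lam i j = 0),
        \sum_(i < d) \sum_(j < d) lam i j = 1 &
        (forall k : 'I_d, x k = m%:R * \sum_(i < d) \sum_(j < d) lam i j * rho R i j k)].

Definition lattice_point_Kd (R : realType) (d m : nat) (x : {ffun 'I_d -> int}) : Prop :=
  @in_dilated_edge_polytope_Kd R d m (fun k => (x k)%:~R).

(* p is the Ehrhart polynomial of P_{K_d}: for every integer m >= 0,
   p(m) = #(m P_{K_d} ∩ Z^d) (the lattice points form a finite set,
   enumerated without repetition by s). *)
Definition is_ehrhart_poly_Kd (R : realType) (d : nat) (p : {poly algC}) : Prop :=
  forall m : nat, exists s : seq {ffun 'I_d -> int},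
    [/\ uniq s,
        (forall x, x \in s <-> @lattice_point_Kd R d m x) &
        p.[m%:R] = (size s)%:R].

From HB Require Import structures.
From mathcomp Require Import all_boot all_order all_algebra all_field.
From mathcomp Require Import reals.
From mathcomp Require Import ring zify.
Import Order.TTheory GRing.Theory Num.Theory.

(** Write d = n + 1.  An integer vector lies in m P_{K_d} iff it is the degree
    vector of a loopless multigraph with m edges, i.e. iff its entries lie in
    [0, m] and sum to 2m.  Since at most one entry of such a composition of 2m
    can exceed m, inclusion-exclusion gives
      i(P_{K_d}, m) = C(n + 2m, n) - d C(m + n - 1, n),
    so n! i(P_{K_d}, x) = prod_(i<n) (2x + i + 1) - d prod_(i<n) (x + i).
    At a root a the two products have equal moduli up to the factor d.  If
    Re a >= 0, or if Re a <= -d/2 (after the substitution z = -2a - d), then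
    comparing the factors pairwise with  b |z + a| <= a |z + b|  for
    0 <= b <= a and Re z >= 0  makes one side strictly larger. *)

(** * Degree sequences of loopless multigraphs *)

Lemma sorted_nth_shift_lt {disp : Order.disp_t} {T : orderType disp} (x0 : T)
    (s : seq T) m t :
  sorted <=%O s -> (forall x, count_mem x s <= m) -> t < m -> m + t < size s ->
  (nth x0 s t < nth x0 s (m + t))%O.
Proof.
move=> s_sorted s_count t_lt_m mt_lt.
have s_mono i j : i <= j -> j < size s -> (nth x0 s i <= nth x0 s j)%O.
  move=> ij j_lt; apply: le_sorted_leq_nth => //; rewrite inE //.
  exact: leq_ltn_trans j_lt.
rewrite lt_neqAle s_mono ?leq_addl // andbT; apply/negP => /eqP s_eq.
set x := nth x0 s t in s_eq.
have seg_size : size (take m.+1 (drop t s)) = m.+1.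
  by rewrite size_takel // size_drop ltn_subRL addnC.
have seg_x : all (pred1 x) (take m.+1 (drop t s)).
  apply/(all_nthP x0) => i; rewrite seg_size => i_lt.
  by rewrite nth_take // nth_drop /= eq_le {1}s_eq !s_mono //; lia.
have := s_count x.
rewrite -(cat_take_drop t s) -(cat_take_drop m.+1 (drop t s)) !count_cat.
by move: seg_x; rewrite all_count seg_size => /eqP ->; lia.
Qed.

Lemma count_flatten_nseq {T : finType} (c : T -> nat) (p : pred T) :
  count p (flatten [seq nseq (c x) x | x <- enum T]) = \sum_(x | p x) c x.
Proof.
rewrite count_flatten -map_comp sumnE big_map big_enum [RHS]big_mkcond /=.
by apply: eq_bigr => x _; rewrite count_nseq; case: (p x); rewrite ?mul1n.
Qed.

(** Pair the t-th and (m+t)-th entries of the sorted list in which each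
    vertex k occurs c k times; they differ since no vertex occurs m+1 times. *)
Lemma multigraph_of_degrees {d m : nat} (c : 'I_d -> nat) :
  (forall k, c k <= m) -> \sum_k c k = 2 * m ->
  exists E : seq ('I_d * 'I_d),
    [/\ size E = m, all (fun e : 'I_d * 'I_d => e.1 < e.2) E &
         forall k, count_mem k (unzip1 E ++ unzip2 E) = c k].
Proof.
move=> c_le c_sum; pose s := sort <=%O (flatten [seq nseq (c k) k | k <- enum 'I_d]).
have count_s k : count_mem k s = c k.
  by rewrite count_sort count_flatten_nseq big_pred1_eq.
have size_s : size s = 2 * m by rewrite -count_predT count_sort count_flatten_nseq.
have take_size : size (take m s) = m by apply: size_takel; rewrite size_s; lia.
have drop_size : size (drop m s) = m by rewrite size_drop size_s; lia.
exists (zip (take m s) (drop m s)); split.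
- by rewrite size_zip take_size drop_size minnn.
- apply/allP => -[i j] /(nthP (i, j)) [t]; rewrite size_zip take_size drop_size minnn.
  move=> t_lt; rewrite nth_zip ?take_size ?drop_size // nth_take // nth_drop.
  move=> -[<- <-] /=; rewrite (set_nth_default i j) ?size_s; last lia.
  apply: (@sorted_nth_shift_lt _ _ i s m t) => //; last by rewrite size_s; lia.
    exact: sort_le_sorted.
  by move=> k; rewrite count_s.
- by move=> k; rewrite unzip1_zip ?unzip2_zip ?take_size ?drop_size // cat_take_drop.
Qed.

Definition compositions n N : {set n.-tuple 'I_N.+1} :=
  [set t : n.-tuple 'I_N.+1 | \sum_(i <- t) i == N].

Definition bounded_tuples n N m : {set n.-tuple 'I_N} :=
  [set t : n.-tuple 'I_N | all (fun i : 'I_N => i <= m) t].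

Definition degree_tuples n m := compositions n (2 * m) :&: bounded_tuples n _ m.

(** A composition of 2(m+1) has at most one part exceeding m+1; subtracting
    m+2 from it leaves a composition of m, and [raise_part] is the inverse. *)
Definition raise_part {n m : nat} (p : 'I_n * n.-tuple 'I_m.+1) :
  n.-tuple 'I_(2 * m.+1).+1 :=
  [tuple inord (tnth p.2 k + (k == p.1) * m.+2) | k < n].

Lemma tnth_addn_le_sum {T : Type} {n : nat} (t : n.-tuple T) (F : T -> nat) i j :
  i != j -> F (tnth t i) + F (tnth t j) <= \sum_(x <- t) F x.
Proof.
move=> ij; rewrite big_tuple (bigD1 i) //= (bigD1 j) 1?eq_sym //=.
by rewrite addnA leq_addr.
Qed.

Section RaisePart.
Variables n m : nat.

Lemma tnth_raise_part (p : 'I_n * n.-tuple 'I_m.+1) k :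
  tnth (raise_part p) k = tnth p.2 k + (k == p.1) * m.+2 :> nat.
Proof.
rewrite tnth_mktuple inordK //.
by have := ltn_ord (tnth p.2 k); case: (k == p.1); lia.
Qed.

Lemma raise_part_inj : injective (@raise_part n m).
Proof.
move=> [i u] [j v] /= uv.
have big_i : m < tnth (raise_part (j, v)) i by rewrite -uv tnth_raise_part eqxx; lia.
have ij : i = j.
  apply/eqP; apply: contraTT big_i => /negbTE ij.
  by rewrite tnth_raise_part ij /= addn0 -leqNgt -ltnS.
subst j; congr (_, _); apply: eq_from_tnth => k; apply: val_inj.
by have := congr1 (fun t => val (tnth t k)) uv; rewrite /= !tnth_raise_part => /addIn.
Qed.

Lemma sum_raise_part (p : 'I_n * n.-tuple 'I_m.+1) :
  \sum_(i <- raise_part p) i = \sum_(i <- p.2) i + m.+2.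
Proof.
rewrite !big_tuple; under eq_bigr do rewrite tnth_raise_part.
rewrite big_split /= [X in _ + X](bigD1 p.1) //= eqxx mul1n.
by rewrite [X in _ + (_ + X)]big1 ?addn0 // => k /negbTE ->.
Qed.

Lemma raise_part_image :
  raise_part @: setX [set: 'I_n] (compositions n m) =
  compositions n (2 * m.+1) :\: bounded_tuples n _ m.+1.
Proof.
apply/setP => t; rewrite !inE; apply/imsetP/idP.
  case=> [[i u]]; rewrite !inE /= => /eqP u_sum ->.
  rewrite sum_raise_part u_sum andbC; apply/andP; split; first by apply/eqP; lia.
  apply/allPn; exists (tnth (raise_part (i, u)) i); first exact: mem_tnth.
  by rewrite tnth_raise_part eqxx -ltnNge; lia.
case/andP => /allPn [_ /tnthP [i ->]]; rewrite -ltnNge => big_i /eqP t_sum.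
have small k : k != i -> tnth t k <= m.
  move=> ki; have := tnth_addn_le_sum t (@nat_of_ord _) _ _ ki; rewrite t_sum.
  (* [set] merges the two elaborations of [tnth t i] into one atom for [lia]. *)
  by move: big_i; set a := nat_of_ord (tnth t i); lia.
pose u := [tuple inord (tnth t k - (k == i) * m.+2) : 'I_m.+1 | k < n].
have tnth_u k : tnth u k = tnth t k - (k == i) * m.+2 :> nat.
  rewrite tnth_mktuple inordK //; have := ltn_ord (tnth t i).
  by case: (k =P i) => [-> | /eqP /small]; lia.
have t_eq : t = raise_part (i, u).
  apply: eq_from_tnth => k; apply: val_inj => /=; rewrite tnth_raise_part tnth_u subnK //.
  by case: (k =P i) => [-> | _]; rewrite ?mul1n ?mul0n.
exists (i, u) => //; rewrite in_setX in_setT inE; apply/eqP.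
by have := sum_raise_part (i, u); rewrite -t_eq t_sum /=; lia.
Qed.

End RaisePart.

Lemma card_degree_tuples n m : (0 < n)%N ->
  #|degree_tuples n.+1 m| + n.+1 * 'C(m + n - 1, n) = 'C(n + 2 * m, n).
Proof.
move=> n_gt0; rewrite -card_ord_partitions -/(compositions _ _).
rewrite -[RHS](cardsID (bounded_tuples _ _ m)); congr (_ + _).
case: m => [|m].
  rewrite bin_small ?muln0; last by rewrite add0n subn1 prednK // ltnS.
  symmetry; apply: eq_card0 => t; rewrite !inE.
  by apply/negP => /andP [/allPn [x _]]; rewrite -ltnS ltn_ord.
rewrite -raise_part_image card_imset; last exact: raise_part_inj.
by rewrite cardsX cardsT card_ord card_ord_partitions addSn subn1 addnC.
Qed.

(** * Lattice points of the dilated edge polytope of K_d *)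

Local Open Scope ring_scope.

Lemma sum_delta_mull {T : finType} {R : pzSemiRingType} (a : T) (F : T -> R) :
  \sum_x (x == a)%:R * F x = F a.
Proof.
rewrite (bigD1 a) //= eqxx mul1r big1 ?addr0 // => x /negbTE ->.
by rewrite mul0r.
Qed.

Lemma sum_delta {T : finType} {R : pzSemiRingType} (a : T) :
  \sum_x ((x == a)%:R : R) = 1.
Proof.
by rewrite -[RHS](sum_delta_mull a (fun=> 1)); apply: eq_bigr => x _; rewrite mulr1.
Qed.

Lemma sum_count_mem_mull {T : finType} {R : pzSemiRingType} (s : seq T) (F : T -> R) :
  \sum_x (count_mem x s)%:R * F x = \sum_(y <- s) F y.
Proof.
elim: s => [|y s IHs]; first by rewrite big_nil big1 // => x _; rewrite mul0r.
rewrite big_cons -IHs -(sum_delta_mull y F) -big_split /=.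
by apply: eq_bigr => x _; rewrite natrD mulrDl eq_sym.
Qed.

Section EdgePolytopeKd.
Variables (R : realType) (d : nat).

Lemma sum_rho (i j : 'I_d) : \sum_k rho R i j k = 2.
Proof. by rewrite big_split /= !sum_delta. Qed.

Lemma sum_rho_seq (E : seq ('I_d * 'I_d)) k :
  \sum_(e <- E) rho R e.1 e.2 k = (count_mem k (unzip1 E ++ unzip2 E))%:R.
Proof.
elim: E => [|e E IHE]; first by rewrite big_nil.
rewrite big_cons IHE /rho /= !count_cat /= !natrD (eq_sym e.1) (eq_sym e.2); ring.
Qed.

Lemma rho_le1 (i j k : 'I_d) : (i < j)%N -> rho R i j k <= 1.
Proof.
move=> ij; have i_neq_j : i != j by apply: contraTneq ij => ->; rewrite ltnn.
rewrite /rho -natrD lern1.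
by case: (k =P i) => [-> | _]; rewrite ?(negbTE i_neq_j) //; case: (k == j).
Qed.

Lemma lattice_point_Kd_bounds (m : nat) (x : {ffun 'I_d -> int}) :
  lattice_point_Kd R m x -> (forall k, 0 <= x k <= m) /\ \sum_k x k = (2 * m)%N.
Proof.
case=> lam [lam_ge0 lam_supp lam_sum x_def].
pose y k := \sum_i \sum_j lam i j * rho R i j k.
have y_ge0 k : 0 <= y k.
  by do 2![apply: sumr_ge0 => ? _]; rewrite mulr_ge0 ?addr_ge0.
have y_le1 k : y k <= 1.
  rewrite -lam_sum; apply: ler_sum => i _; apply: ler_sum => j _.
  have [/rho_le1 rho_le | /lam_supp ->] := boolP (i < j)%N; last by rewrite mul0r.
  by rewrite ler_piMr.
have y_sum : \sum_k y k = 2.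
  transitivity (2 * \sum_i \sum_j lam i j); last by rewrite lam_sum mulr1.
  rewrite exchange_big mulr_sumr; apply: eq_bigr => i _.
  rewrite exchange_big mulr_sumr; apply: eq_bigr => j _.
  by rewrite -mulr_sumr sum_rho mulrC.
split=> [k|].
  rewrite -(ler0z R) -(ler_int R) x_def -/(y k) mulr_ge0 ?ler0n //=.
  exact: ler_piMr.
apply: (@intr_inj R); rewrite raddf_sum /=.
transitivity (m%:R * \sum_k y k); first by rewrite mulr_sumr; apply: eq_bigr => k _.
by rewrite y_sum mulrC -natrM.
Qed.

Lemma degrees_in_dilated_edge_polytope {E : seq ('I_d * 'I_d)} :
  E != [::] -> all (fun e : 'I_d * 'I_d => e.1 < e.2)%N E ->
  in_dilated_edge_polytope_Kd (size E)
    (fun k => (count_mem k (unzip1 E ++ unzip2 E))%:R : R).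
Proof.
move=> E_neq0 E_lt; have size_neq0 : (size E)%:R != 0 :> R by rewrite pnatr_eq0 size_eq0.
exists (fun i j => (count_mem (i, j) E)%:R / (size E)%:R); split.
- by move=> i j; rewrite divr_ge0.
- move=> i j ij; rewrite (count_memPn _) ?mul0r //.
  by apply: contraNN ij => /(allP E_lt).
- rewrite pair_bigA /= -mulr_suml -[RHS](divff size_neq0); congr (_ / _).
  under eq_bigr => p _ do rewrite -surjective_pairing -[_%:R]mulr1.
  by rewrite sum_count_mem_mull big_const_seq count_predT iter_addr_0.
- move=> k; rewrite -sum_rho_seq pair_bigA -sum_count_mem_mull mulr_sumr.
  apply: eq_bigr => p _.
  by rewrite -surjective_pairing mulrA mulrCA divff ?mulr1.
Qed.

Lemma lattice_point_Kd_of_bounds (m : nat) (x : {ffun 'I_d -> int}) : (1 < d)%N ->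
  (forall k, 0 <= x k <= m) -> \sum_k x k = (2 * m)%N -> lattice_point_Kd R m x.
Proof.
move=> d_gt1 x_bnd x_sum; pose c k := `|x k|%N.
have x_c k : x k = c k by rewrite gez0_abs //; case/andP: (x_bnd k).
case: m x_bnd x_sum => [|m] x_bnd x_sum.
  pose e : 'I_d * 'I_d := (Ordinal (ltnW d_gt1), Ordinal d_gt1).
  have [lam [lam_ge0 lam_supp lam_sum _]] :=
    @degrees_in_dilated_edge_polytope [:: e] isT isT.
  exists lam; split=> // k; rewrite mul0r.
  by have := x_bnd k; rewrite -eq_le => /eqP <-.
have c_le k : (c k <= m.+1)%N by rewrite -lez_nat -x_c; case/andP: (x_bnd k).
have c_sum : (\sum_k c k = 2 * m.+1)%N.
  apply/eqP; rewrite -eqz_nat -x_sum (big_morph Posz PoszD (erefl _)).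
  by apply/eqP/eq_bigr => k _; rewrite x_c.
have [E [E_size E_lt E_deg]] := multigraph_of_degrees c c_le c_sum.
have E_neq0 : E != [::] by rewrite -size_eq0 E_size.
have [lam [lam_ge0 lam_supp lam_sum lam_deg]] :=
  degrees_in_dilated_edge_polytope E_neq0 E_lt.
by exists lam; split=> // k; rewrite -E_size -lam_deg E_deg x_c.
Qed.

End EdgePolytopeKd.

Definition int_ffun_of_tuple {n N : nat} (t : n.-tuple 'I_N) : {ffun 'I_n -> int} :=
  [ffun k => (tnth t k : nat)%:Z].

Lemma int_ffun_of_tuple_inj n N : injective (@int_ffun_of_tuple n N).
Proof.
move=> t u tu; apply: eq_from_tnth => k; apply: val_inj.
by have := congr1 (fun f : {ffun 'I_n -> int} => f k) tu; rewrite !ffunE => -[].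
Qed.

Lemma lattice_point_Kd_tupleP (R : realType) d m (x : {ffun 'I_d -> int}) : (1 < d)%N ->
  lattice_point_Kd R m x <-> x \in image int_ffun_of_tuple (degree_tuples d m).
Proof.
move=> d_gt1; split.
  case/lattice_point_Kd_bounds => x_bnd x_sum.
  have x_abs k : x k = `|x k|%N by rewrite gez0_abs //; case/andP: (x_bnd k).
  have abs_le k : (`|x k| <= m)%N by rewrite -lez_nat -x_abs; case/andP: (x_bnd k).
  pose t := [tuple (inord `|x k| : 'I_(2 * m).+1) | k < d].
  have tnth_t k : tnth t k = `|x k|%N :> nat.
    by rewrite tnth_mktuple inordK // ltnS (leq_trans (abs_le k)) // leq_pmull.
  apply/imageP; exists t; last by apply/ffunP => k; rewrite ffunE tnth_t -x_abs.
  rewrite !inE big_tuple; apply/andP; split.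
    rewrite -eqz_nat -x_sum (big_morph Posz PoszD (erefl _)).
    by apply/eqP/eq_bigr => k _; rewrite tnth_t -x_abs.
  by apply/all_tnthP => k; rewrite tnth_t abs_le.
case/imageP => t; rewrite !inE => /andP [/eqP t_sum /all_tnthP t_bnd] ->.
apply: lattice_point_Kd_of_bounds => // [k | ]; rewrite ?ffunE ?lez_nat ?t_bnd //.
transitivity (Posz (\sum_(i <- t) i)); last by rewrite t_sum.
rewrite big_tuple (big_morph Posz PoszD (erefl _)).
by apply: eq_bigr => k _; rewrite ffunE.
Qed.

(** * Roots of the Ehrhart polynomial *)

Lemma sqr_normDr_real {C : numClosedFieldType} (z c : C) : c \is Num.real ->
  `|z + c| ^+ 2 = `|z| ^+ 2 + 2 * c * 'Re z + c ^+ 2.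
Proof.
move=> cR; rewrite !normCK rmorphD /= (conj_Creal cR) ReE.
have two_neq0 : (2 : C) != 0 by rewrite pnatr_eq0.
by field.
Qed.

Lemma natr_sub_double_succ {R : pzRingType} n i :
  n.+2%:R - (2 * i.+1)%:R = n%:R - (2 * i)%:R :> R.
Proof. by rewrite mulnS !natrD -addn2 natrD addrKA. Qed.

Section RightHalfPlane.
Context {C : numClosedFieldType} {z : C}.
Hypothesis Re_z_ge0 : 0 <= 'Re z.

Lemma normDr_le_real (c e : C) : c \is Num.real -> `|c| <= e ->
  `|z + c| <= `|z + e|.
Proof.
move=> cR ce; have e_ge0 : 0 <= e := le_trans (normr_ge0 c) ce.
have eR : e \is Num.real := ger0_real e_ge0.
rewrite -(ler_pXn2r (n := 2)) ?nnegrE // !sqr_normDr_real //.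
rewrite -!addrA lerD2l lerD //.
  by rewrite -!mulrA ler_wpM2l // ler_wpM2r // (le_trans (real_ler_norm cR)).
by rewrite -(real_normK cR) ler_pXn2r ?nnegrE.
Qed.

Lemma normDr_ratio_le (a b : C) : 0 <= b -> b <= a ->
  b * `|z + a| <= a * `|z + b|.
Proof.
move=> b_ge0 ba; have a_ge0 : 0 <= a := le_trans b_ge0 ba.
have [aR bR] := (ger0_real a_ge0, ger0_real b_ge0).
rewrite -(ler_pXn2r (n := 2)) ?nnegrE ?mulr_ge0 // !exprMn !sqr_normDr_real //.
rewrite -subr_ge0.
have -> : a ^+ 2 * (`|z| ^+ 2 + 2 * b * 'Re z + b ^+ 2) -
    b ^+ 2 * (`|z| ^+ 2 + 2 * a * 'Re z + a ^+ 2) =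
  (a ^+ 2 - b ^+ 2) * `|z| ^+ 2 + 2 * a * b * (a - b) * 'Re z by ring.
have sqr_ba : b ^+ 2 <= a ^+ 2 by rewrite ler_pXn2r ?nnegrE.
by rewrite addr_ge0 ?mulr_ge0 ?subr_ge0.
Qed.

Lemma normDr_gt0 (c : C) : 0 < c -> 0 < `|z + c|.
Proof.
move=> c_gt0; rewrite -(ltr_pXn2r (n := 2)) ?nnegrE // expr0n /=.
rewrite sqr_normDr_real ?gtr0_real //.
apply: ltr_wpDl; last by rewrite exprn_gt0.
by rewrite addr_ge0 ?mulr_ge0 ?exprn_ge0 ?(ltW c_gt0).
Qed.

Lemma norm_lt_normDr1 : `|z| < `|z + 1|.
Proof.
rewrite -(ltr_pXn2r (n := 2)) ?nnegrE // sqr_normDr_real ?real1 //.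
by rewrite -addrA ltrDl expr1n mulr1 ltr_wpDl ?mulr_ge0.
Qed.

Lemma prod_normDr_centered_le n :
  \prod_(i < n) `|z + (n%:R - (2 * i)%:R)| <= \prod_(i < n) `|z + i.+1%:R|.
Proof.
elim/ltn_ind: n => -[|[|n]] IHn; first by rewrite !big_ord0.
  by rewrite !big_ord1 muln0 subr0.
rewrite big_ord_recl big_ord_recr !big_ord_recr /= muln0 subr0.
under eq_bigr do rewrite natr_sub_double_succ.
rewrite natr_sub_double_succ mulrC ler_wpM2r // ler_pM ?prodr_ge0 ?IHn //.
have -> : n%:R - (2 * n)%:R = - n%:R :> C by rewrite natrM; ring.
by apply: normDr_le_real; rewrite ?realN ?realn // normrN normr_nat ler_nat.
Qed.

Lemma prod_normDr_centered_succ_le n :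
  n%:R * \prod_(i < n) `|z + (n.+1%:R - (2 * i)%:R)| <=
  n.+1%:R * \prod_(i < n) `|z + i.+1%:R|.
Proof.
case: n => [|n]; first by rewrite !big_ord0 !mulr1.
rewrite big_ord_recl big_ord_recr /= muln0 subr0.
under eq_bigr do rewrite natr_sub_double_succ.
rewrite mulrA mulrCA mulrC ler_pM ?mulr_ge0 ?prodr_ge0 ?prod_normDr_centered_le //.
by apply: normDr_ratio_le; rewrite ?ler0n ?ler_nat.
Qed.

End RightHalfPlane.

Lemma normDr_double_lt {C : numClosedFieldType} (a : C) n : 0 <= 'Re a ->
  n.+2%:R * `|a + n%:R| < n.+1%:R * `|a *+ 2 + n.+1%:R|.
Proof.
move=> Re_a_ge0; have Re_2a_ge0 : 0 <= 'Re (a *+ 2) by rewrite raddfMn mulrn_wge0.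
case: n => [|n].
  by rewrite addr0 mul1r mulr_natl -normrMn norm_lt_normDr1.
have ratio : n.+2%:R * `|a + n.+1%:R| <= n.+1%:R * `|a *+ 2 + n.+2%:R|.
  have := normDr_ratio_le Re_2a_ge0 (n.+1%:R *+ 2) n.+2%:R.
  rewrite -mulrnDl normrMn (mulrnAr _ _ 2) (mulrnAl _ _ 2) lerMn2r /=.
  by apply; rewrite ?ler0n // -mulrnA ler_nat; lia.
rewrite -(ltr_pM2l (ltr0Sn _ n.+1)) mulrA (mulrC n.+2%:R) -mulrA.
apply: le_lt_trans (ler_wpM2l (ler0n _ _) ratio) _.
rewrite !mulrA -!natrM ltr_pM2r ?normDr_gt0 ?ltr0n ?ltr_nat //; lia.
Qed.

Lemma normr_prod_double_lt {C : numClosedFieldType} (a : C) n : 0 <= 'Re a ->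
  n.+2%:R * `|\prod_(i < n.+1) (a + i%:R)| < `|\prod_(i < n.+1) (a *+ 2 + i.+1%:R)|.
Proof.
move=> Re_a_ge0; elim: n => [|n IHn].
  by rewrite !big_ord1 -[X in _ < X]mul1r; apply: normDr_double_lt.
rewrite big_ord_recr [X in _ < `|X|]big_ord_recr /= !normrM.
have nonneg (k : nat) (x : C) : 0 <= k%:R * `|x| by rewrite mulr_ge0.
have := ltr_pM (nonneg _ _) (nonneg _ _) IHn (normDr_double_lt a n.+1 Re_a_ge0).
by rewrite mulrACA (mulrCA _ n.+2%:R) -mulrA ltr_pM2l.
Qed.

Lemma ltn_sqrS_mul_exp2 n : (3 <= n)%N -> (n.+1 ^ 2 < n * 2 ^ n)%N.
Proof.
elim: n => // n IHn; rewrite leq_eqVlt => /predU1P [<- // | n_ge3].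
have sqr_le : (n.+2 ^ 2 <= 2 * n.+1 ^ 2)%N by nia.
have := IHn n_ge3; rewrite [(2 ^ n.+1)%N]expnS; nia.
Qed.

Section EhrhartRootEquation.
Context {C : numClosedFieldType} (n : nat) (a : C).
Hypothesis root_eq :
  \prod_(i < n) (a *+ 2 + i.+1%:R) = n.+1%:R * \prod_(i < n) (a + i%:R).

Lemma root_eq_Re_lt0 : (0 < n)%N -> 'Re a < 0.
Proof.
case: n root_eq => // k eq_k _.
rewrite real_ltNge ?Creal_Re //; apply/negP => Re_a_ge0.
have := normr_prod_double_lt a k Re_a_ge0.
by rewrite eq_k normrM normr_nat ltxx.
Qed.

Lemma root_eq_Re_gt : (3 <= n)%N -> - (n.+1%:R / 2) < 'Re a.
Proof.
move=> n_ge3; rewrite real_ltNge ?Creal_Re ?realN ?realM ?realV ?realn //.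
apply/negP => Re_a_le.
(* In terms of z the moduli of the two sides of [root_eq] become
   prod_(i<n) |z + i + 1|  and  2^-n prod_(i<n) |z + (n + 1 - 2i)|. *)
pose z := - (a *+ 2) - n.+1%:R.
have a2 : a *+ 2 = - (z + n.+1%:R) by rewrite /z subrK opprK.
have Re_z_ge0 : 0 <= 'Re z.
  have Re_n : 'Re (n.+1%:R : C) = n.+1%:R by apply/Creal_ReP; rewrite realn.
  rewrite /z raddfB raddfN raddfMn /= Re_n subr_ge0 lerNr.
  by rewrite -(mulr_natr ('Re a)) -ler_pdivlMr ?ltr0n // mulNr.
have normA : `|\prod_(i < n) (a *+ 2 + i.+1%:R)| = \prod_(i < n) `|z + i.+1%:R|.
  rewrite normr_prod (reindex_inj rev_ord_inj) /=; apply: eq_bigr => i _.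
  rewrite a2 -normrN subnSK // natrB ?(ltnW (ltn_ord i)) //; congr `|_|; ring.
have normM : `|\prod_(i < n) (a + i%:R)| *+ 2 ^ n =
    \prod_(i < n) `|z + (n.+1%:R - (2 * i)%:R)|.
  rewrite normr_prod -[in X in _ *+ (2 ^ X)](card_ord n) -prodrMn_const.
  apply: eq_bigr => i _; rewrite -normrMn mulrnDl a2 -normrN natrM; congr `|_|.
  ring.
have A_gt0 : 0 < \prod_(i < n) `|z + i.+1%:R|.
  by apply: prodr_gt0 => i _; rewrite normDr_gt0 ?ltr0Sn.
have := prod_normDr_centered_succ_le Re_z_ge0 n.
rewrite -normM -normA root_eq normrM normr_nat in A_gt0 *.
move: A_gt0; set P := `|\prod_(i < n) (a + i%:R)| => A_gt0.
have P_gt0 : 0 < P by rewrite -(pmulr_rgt0 _ (ltr0Sn _ n)).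
rewrite -(mulr_natl P) mulrA mulrCA mulrA -!natrM ler_pM2r // ler_nat.
by rewrite leqNgt -[(n.+1 * n.+1)%N]/(n.+1 ^ 2)%N ltn_sqrS_mul_exp2.
Qed.

Lemma root_eq2 : n = 2 -> a = -1 \/ a = -2.
Proof.
move=> n_eq2; move: root_eq; rewrite n_eq2 !big_ord_recr !big_ord0 /= => eq2.
move/eqP: eq2; rewrite -subr_eq0 => /eqP eq2.
have : (a + 1) * (a + 2) = 0 by rewrite -eq2; ring.
by move/eqP; rewrite mulf_eq0 !addr_eq0 => /orP[] /eqP ->; [left | right].
Qed.

End EhrhartRootEquation.

(** * The Ehrhart polynomial of P_{K_d} *)

Lemma prod_addnS_bin k n : (\prod_(i < n) (k + i.+1) = 'C(k + n, n) * n`!)%N.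
Proof.
rewrite bin_ffact ffact_prod (reindex_inj rev_ord_inj) /=.
by apply: eq_bigr => i _; have := ltn_ord i; lia.
Qed.

Lemma prod_addn_bin m n : (\prod_(i < n) (m + i) = 'C(m + n - 1, n) * n`!)%N.
Proof.
case: m => [|m].
  case: n => [|n]; first by rewrite big_ord0.
  by rewrite big_ord_recl bin_small ?add0n ?subn1.
by rewrite addSn subn1 /= -prod_addnS_bin; apply: eq_bigr => i _; lia.
Qed.

Lemma eq_poly_on_nat {R : numDomainType} (p q : {poly R}) :
  (forall m : nat, p.[m%:R] = q.[m%:R]) -> p = q.
Proof.
move=> pq; apply/eqP; rewrite -subr_eq0; apply: contraT => pq_neq0.
pose rs := [seq (i%:R : R) | i <- iota 0 (size (p - q))].
have rs_roots : all (root (p - q)) rs.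
  by apply/allP => _ /mapP [i _ ->]; rewrite rootE !hornerE pq subrr.
have rs_uniq : uniq rs.
  by rewrite map_inj_uniq ?iota_uniq // => i j /eqP; rewrite eqr_nat => /eqP.
by have := max_poly_roots pq_neq0 rs_roots rs_uniq; rewrite size_map size_iota ltnn.
Qed.

Definition ehrhart_Kd_poly {F : numFieldType} d : {poly F} :=
  (d.-1`!%:R)^-1 *: (\prod_(i < d.-1) ('X *+ 2 + i.+1%:R%:P)
                     - d%:R *: \prod_(i < d.-1) ('X + i%:R%:P)).

Lemma horner_ehrhart_Kd_poly {F : numFieldType} d (x : F) :
  (ehrhart_Kd_poly d).[x] = (d.-1`!%:R)^-1 *
    (\prod_(i < d.-1) (x *+ 2 + i.+1%:R) - d%:R * \prod_(i < d.-1) (x + i%:R)).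
Proof.
rewrite /ehrhart_Kd_poly hornerZ hornerD hornerN hornerZ !horner_prod.
by congr (_ * (_ - _ * _)); apply: eq_bigr => i _; rewrite !hornerE.
Qed.

Lemma root_ehrhart_Kd_poly {F : numFieldType} n (a : F) :
  root (ehrhart_Kd_poly n.+1) a ->
  \prod_(i < n) (a *+ 2 + i.+1%:R) = n.+1%:R * \prod_(i < n) (a + i%:R).
Proof.
rewrite rootE horner_ehrhart_Kd_poly mulf_eq0 invr_eq0 pnatr_eq0 eqn0Ngt fact_gt0 /=.
by rewrite subr_eq0 => /eqP.
Qed.

Lemma ehrhart_Kd_poly_nat {F : numFieldType} n m : (0 < n)%N ->
  (ehrhart_Kd_poly n.+1).[m%:R] = #|degree_tuples n.+1 m|%:R :> F.
Proof.
move=> n_gt0; rewrite horner_ehrhart_Kd_poly /=.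
have prod_double :
    \prod_(i < n) ((m%:R : F) *+ 2 + i.+1%:R) = ('C(n + 2 * m, n) * n`!)%:R.
  rewrite addnC -prod_addnS_bin natr_prod; apply: eq_bigr => i _.
  by rewrite natrD (mulnC 2) mulrnA.
have prod_shift : \prod_(i < n) ((m%:R : F) + i%:R) = ('C(m + n - 1, n) * n`!)%:R.
  by rewrite -prod_addn_bin natr_prod; apply: eq_bigr => i _; rewrite natrD.
have fact_neq0 : n`!%:R != 0 :> F by rewrite pnatr_eq0 -lt0n fact_gt0.
rewrite prod_double prod_shift -(card_degree_tuples n m n_gt0) !natrM natrD.
by field.
Qed.

Lemma ehrhart_Kd_polyP (R : realType) {d : nat} : (1 < d)%N ->
  is_ehrhart_poly_Kd R d (ehrhart_Kd_poly d).
Proof.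
case: d => // n n_gt0 m; exists (image int_ffun_of_tuple (degree_tuples n.+1 m)); split.
- by rewrite map_inj_uniq ?enum_uniq //; exact: int_ffun_of_tuple_inj.
- by move=> x; rewrite lattice_point_Kd_tupleP.
- by rewrite size_map -cardE ehrhart_Kd_poly_nat.
Qed.

Lemma is_ehrhart_poly_Kd_uniq {R : realType} {d : nat} {p q : {poly algC}} :
  is_ehrhart_poly_Kd R d p -> is_ehrhart_poly_Kd R d q -> p = q.
Proof.
move=> p_ehr q_ehr; apply: eq_poly_on_nat => m.
have [s [s_uniq s_mem ->]] := p_ehr m; have [s' [s'_uniq s'_mem ->]] := q_ehr m.
congr _%:R; apply/perm_size/uniq_perm => // x.
by apply/idP/idP => [/s_mem/s'_mem | /s'_mem/s_mem].
Qed.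

Theorem proposition1p2 (R : realType) (d : nat) (p : {poly algC}) (alpha : algC) :
  (3 <= d)%N ->
  is_ehrhart_poly_Kd R d p ->
  root p alpha ->
  (d = 3%N -> alpha = -1 \/ alpha = -2) /\
  ((4 <= d)%N -> - (d%:R / 2) < 'Re alpha /\ 'Re alpha < 0).
Proof.
move=> d_ge3 p_ehr.
rewrite (is_ehrhart_poly_Kd_uniq p_ehr (ehrhart_Kd_polyP R (ltnW d_ge3))).
case: d d_ge3 {p_ehr} => // n n_ge2 /root_ehrhart_Kd_poly root_eq.
split=> [[n_eq2] | d_ge4]; first exact: root_eq2 root_eq n_eq2.
split; first exact: root_eq_Re_gt root_eq d_ge4.
exact: root_eq_Re_lt0 root_eq (ltnW n_ge2).
Qed.
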